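(* Let $F_{ij}$ ($0\le i\le m$, $0\le j\le n$) be a dual-convex $m\times n$ net in $I^3$. A collection of points $G_{ij}$ is a velocity diagram of $F_{ij}$ if and only if $G_{ij}$ is an $m\times n$ net which is v-parallel to $F_{ij}$, is not contained in a single plane, and has vanishing mixed curvature with $F_{ij}$ at all pairs of corresponding vertices.
   Context: $I^3$ is $\mathbb{R}^3$ with coordinates $(x,y,z)$; isotropic = parallel to the $z$-axis; top view $\overline P$ of $P=(x,y,z)$ is $(x,y)$ (also identified with $(x,y,0)$). Metric duality: point $P=(P^1,P^2,P^3)\leftrightarrow$ plane $P^*\colon z=P^1x+P^2y-P^3$. Infinitesimal isotropic congruence: vector field $V(\mathbf x)=a\mathbf x+\mathbf b$, $\mathbf b\in\mathbb R^3$, $a=\begin{pmatrix}0&-\phi&0\\ \phi&0&0\\ c_1&c_2&0\end{pmatrix}$. An $m\times n$ net: points $F_{ij}$, $0\le i\le m,0\le j\le n$, with $F_{ij},F_{i+1,j},F_{i+1,j+1},F_{i,j+1}$ consecutive vertices of a convex planar quadrilateral (face $p_{ij}$) for all $0\le i<m,0\le j<n$. Boundary vertices: $i\in\{0,m\}$ or $j\in\{0,n\}$; consecutive faces around non-boundary $F_{ij}$: $p_{i-1,j-1},p_{i,j-1},p_{ij},p_{i-1,j}$. Convex 4-hedral angle, flat angles, admissible (isotropic line through the vertex meets the interior); dual-convex: $m,n\ge2$ and at each non-boundary vertex the four consecutive face planes are planes of four consecutive flat angles of an admissible convex 4-hedral angle. Two nets are v-parallel if vertices with equal indices have equal top views.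 Curvature at a non-boundary vertex with consecutive faces $p_1..p_4$: oriented area $\Omega=\frac12\sum_{k=1}^4\det(\overline{p_k^*},\overline{p_{k+1}^*})$ ($p_5=p_1$) of the closed broken line $\overline{p_1^*}\,\overline{p_2^*}\,\overline{p_3^*}\,\overline{p_4^*}$ (top view of the isotropic Gauss image). Mixed area of plane closed broken lines $ABCD$, $A'B'C'D'$: $\frac{d}{dt}|_{t=0}\mathrm{Area}((A+tA')(B+tB')(C+tC')(D+tD'))$. Mixed curvature of corresponding non-boundary vertices of two v-parallel nets: mixed area of the top views of their isotropic Gauss images; at boundary vertices it is defined to be $0$. Infinitesimal isotropic isometric deformation of dual-convex $F_{ij}$: vectors $V_{ij}$ such that for each face there is an infinitesimal isotropic congruence $V$ with $V_{ij}=V(F_{ij})$ at its four vertices, and $\frac{d}{dt}\Omega(F_{ij}+tV_{ij})|_{t=0}=0$ at each non-boundary vertex; trivial if a single $V$ works for all vertices. A velocity diagram of $F_{ij}$ is the collection $\overline{F_{ij}}+V_{ij}$, where $V_{ij}$ is a nontrivial infinitesimal isotropic isometric deformation of $F_{ij}$ consisting of vectors parallel to the $z$-axis. *)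

From Stdlib Require Import Reals.
From Coquelicot Require Import Coquelicot.
Open Scope R_scope.

(** Points / vectors of I^3 = R^3 with coordinates (x,y,z); z is the isotropic direction. *)
Record pt := mkpt { px : R; py : R; pz : R }.

Definition padd (u v : pt) : pt := mkpt (px u + px v) (py u + py v) (pz u + pz v).
Definition psub (u v : pt) : pt := mkpt (px u - px v) (py u - py v) (pz u - pz v).
Definition pscal (t : R) (u : pt) : pt := mkpt (t * px u) (t * py u) (t * pz u).

Definition det3 (u v w : pt) : R :=
  px u * (py v * pz w - pz v * py w)
  - py u * (px v * pz w - pz v * px w)
  + pz u * (px v * py w - py v * px w).

Definition det2 (a b : R * R) : R := fst a * snd b - snd a * fst b.

(** A, B, C, D are consecutive vertices of a (non-degenerate) convex planar
    quadrilateral: A, B, C are not collinear and the diagonals AC and BD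
    meet at a point interior to both of them. *)
Definition convex_quad (A B C D : pt) : Prop :=
  (exists w : pt, det3 (psub B A) (psub C A) w <> 0) /\
  exists s t : R, 0 < s < 1 /\ 0 < t < 1 /\
    padd A (pscal s (psub C A)) = padd B (pscal t (psub D B)).

(** m x n net: F i j for 0 <= i <= m, 0 <= j <= n (values outside are irrelevant). *)
Definition is_net (m n : nat) (F : nat -> nat -> pt) : Prop :=
  forall i j : nat, (i < m)%nat -> (j < n)%nat ->
    convex_quad (F i j) (F (S i) j) (F (S i) (S j)) (F i (S j)).

Definition parallel_to_face (P : nat -> nat -> pt) (i j : nat) (r : pt) : Prop :=
  det3 (psub (P (S i) j) (P i j)) (psub (P i (S j)) (P i j)) r = 0.

(** Convex 4-hedral angle with edge directions r1, r2, r3, r4 (in cyclic order),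
    flat angles spanned by (r1,r2), (r2,r3), (r3,r4), (r4,r1): each face plane
    leaves the two other edges strictly on the same side, with consistent orientation. *)
Definition convex4 (r1 r2 r3 r4 : pt) : Prop :=
  (0 < det3 r1 r2 r3 /\ 0 < det3 r1 r2 r4 /\ 0 < det3 r2 r3 r4 /\ 0 < det3 r2 r3 r1 /\
   0 < det3 r3 r4 r1 /\ 0 < det3 r3 r4 r2 /\ 0 < det3 r4 r1 r2 /\ 0 < det3 r4 r1 r3) \/
  (det3 r1 r2 r3 < 0 /\ det3 r1 r2 r4 < 0 /\ det3 r2 r3 r4 < 0 /\ det3 r2 r3 r1 < 0 /\
   det3 r3 r4 r1 < 0 /\ det3 r3 r4 r2 < 0 /\ det3 r4 r1 r2 < 0 /\ det3 r4 r1 r3 < 0).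

(** Admissible: the isotropic line through the vertex meets the interior of the
    angle, i.e. some strictly positive combination of the edges is isotropic. *)
Definition admissible4 (r1 r2 r3 r4 : pt) : Prop :=
  exists l1 l2 l3 l4 : R, 0 < l1 /\ 0 < l2 /\ 0 < l3 /\ 0 < l4 /\
    l1 * px r1 + l2 * px r2 + l3 * px r3 + l4 * px r4 = 0 /\
    l1 * py r1 + l2 * py r2 + l3 * py r3 + l4 * py r4 = 0.

(** Dual-convex m x n net. Faces around non-boundary F_ij:
    p_{i-1,j-1}, p_{i,j-1}, p_{ij}, p_{i-1,j}. *)
Definition dual_convex (m n : nat) (F : nat -> nat -> pt) : Prop :=
  (2 <= m)%nat /\ (2 <= n)%nat /\ is_net m n F /\
  forall i j : nat, (0 < i < m)%nat -> (0 < j < n)%nat ->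
    exists r1 r2 r3 r4 : pt, convex4 r1 r2 r3 r4 /\ admissible4 r1 r2 r3 r4 /\
      parallel_to_face F (pred i) (pred j) r1 /\ parallel_to_face F (pred i) (pred j) r2 /\
      parallel_to_face F i (pred j) r2 /\ parallel_to_face F i (pred j) r3 /\
      parallel_to_face F i j r3 /\ parallel_to_face F i j r4 /\
      parallel_to_face F (pred i) j r4 /\ parallel_to_face F (pred i) j r1.

(** Top view of the metric dual p* of the plane of face p_ij of P.
    If the plane is z = a x + b y + c then p* = (a, b, -c), whose top view is (a, b).
    (a, b) is computed by Cramer's rule from the vertices P_ij, P_{i+1,j}, P_{i,j+1}. *)
Definition face_dual_top (P : nat -> nat -> pt) (i j : nat) : R * R :=
  let A := P i j in let B := P (S i) j in let D := P i (S j) in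
  let dx1 := px B - px A in let dy1 := py B - py A in let dz1 := pz B - pz A in
  let dx2 := px D - px A in let dy2 := py D - py A in let dz2 := pz D - pz A in
  let den := dx1 * dy2 - dx2 * dy1 in
  ((dz1 * dy2 - dz2 * dy1) / den, (dx1 * dz2 - dx2 * dz1) / den).

Definition area4 (q1 q2 q3 q4 : R * R) : R :=
  / 2 * (det2 q1 q2 + det2 q2 q3 + det2 q3 q4 + det2 q4 q1).

Definition curvature (P : nat -> nat -> pt) (i j : nat) : R :=
  area4 (face_dual_top P (pred i) (pred j)) (face_dual_top P i (pred j))
        (face_dual_top P i j) (face_dual_top P (pred i) j).

Definition padd2 (a b : R * R) : R * R := (fst a + fst b, snd a + snd b).
Definition pscal2 (t : R) (a : R * R) : R * R := (t * fst a, t * snd a).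

(** Mixed area of closed broken lines ABCD and A'B'C'D' equals 0
    (the derivative at t = 0 of Area((A+tA')(B+tB')(C+tC')(D+tD')) is 0). *)
Definition mixed_area_zero (A B C D A' B' C' D' : R * R) : Prop :=
  is_derive (fun t : R => area4 (padd2 A (pscal2 t A')) (padd2 B (pscal2 t B'))
                               (padd2 C (pscal2 t C')) (padd2 D (pscal2 t D'))) 0 0.

(** Vanishing mixed curvature of v-parallel nets F, G at the vertex (i,j)
    (at boundary vertices it is 0 by definition, hence the condition is trivial). *)
Definition mixed_curvature_zero (m n : nat) (F G : nat -> nat -> pt) (i j : nat) : Prop :=
  (0 < i < m)%nat -> (0 < j < n)%nat ->
  mixed_area_zero
    (face_dual_top F (pred i) (pred j)) (face_dual_top F i (pred j))
    (face_dual_top F i j) (face_dual_top F (pred i) j)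
    (face_dual_top G (pred i) (pred j)) (face_dual_top G i (pred j))
    (face_dual_top G i j) (face_dual_top G (pred i) j).

(** Infinitesimal isotropic congruence V(x) = a x + b with
    a = [[0,-phi,0],[phi,0,0],[c1,c2,0]], b = (b1,b2,b3). *)
Definition iso_cong (phi c1 c2 b1 b2 b3 : R) (x : pt) : pt :=
  mkpt (- phi * py x + b1) (phi * px x + b2) (c1 * px x + c2 * py x + b3).

Definition iso_isometric_deformation (m n : nat) (F V : nat -> nat -> pt) : Prop :=
  (forall i j : nat, (i < m)%nat -> (j < n)%nat ->
     exists phi c1 c2 b1 b2 b3 : R,
       V i j = iso_cong phi c1 c2 b1 b2 b3 (F i j) /\
       V (S i) j = iso_cong phi c1 c2 b1 b2 b3 (F (S i) j) /\
       V (S i) (S j) = iso_cong phi c1 c2 b1 b2 b3 (F (S i) (S j)) /\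
       V i (S j) = iso_cong phi c1 c2 b1 b2 b3 (F i (S j))) /\
  (forall i j : nat, (0 < i < m)%nat -> (0 < j < n)%nat ->
     is_derive (fun t : R => curvature (fun k l => padd (F k l) (pscal t (V k l))) i j) 0 0).

Definition trivial_deformation (m n : nat) (F V : nat -> nat -> pt) : Prop :=
  exists phi c1 c2 b1 b2 b3 : R, forall i j : nat, (i <= m)%nat -> (j <= n)%nat ->
    V i j = iso_cong phi c1 c2 b1 b2 b3 (F i j).

Definition velocity_diagram (m n : nat) (F G : nat -> nat -> pt) : Prop :=
  exists V : nat -> nat -> pt,
    iso_isometric_deformation m n F V /\ ~ trivial_deformation m n F V /\
    (forall i j : nat, (i <= m)%nat -> (j <= n)%nat -> px (V i j) = 0 /\ py (V i j) = 0) /\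
    (forall i j : nat, (i <= m)%nat -> (j <= n)%nat ->
       G i j = padd (mkpt (px (F i j)) (py (F i j)) 0) (V i j)).

Definition v_parallel (m n : nat) (F G : nat -> nat -> pt) : Prop :=
  forall i j : nat, (i <= m)%nat -> (j <= n)%nat ->
    px (G i j) = px (F i j) /\ py (G i j) = py (F i j).

Definition in_one_plane (m n : nat) (G : nat -> nat -> pt) : Prop :=
  exists a b c d : R, (a <> 0 \/ b <> 0 \/ c <> 0) /\
    forall i j : nat, (i <= m)%nat -> (j <= n)%nat ->
      a * px (G i j) + b * py (G i j) + c * pz (G i j) = d.

From Stdlib Require Import Reals Lra Lia Psatz.
From Coquelicot Require Import Coquelicot.
Open Scope R_scope.

(* Every face of a dual-convex net contains two edges of an admissible convex
   4-hedral angle, and these edges have independent top views, so no face plane is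
   isotropic.  Hence a vertical field V restricts on a face to an infinitesimal
   isotropic congruence exactly when the points top(F) + V of that face lie in a
   non-isotropic plane, i.e. form a convex quadrilateral v-parallel to the face of F;
   and V is trivial exactly when all these points lie in one plane.  Finally, over a
   fixed non-degenerate top view the top view of the dual point p* of a face is linear
   in the heights of its vertices, so the curvature of F + tV is the area of the broken
   line with vertices p*(F) + t p*(G), whose derivative at t = 0 is the mixed area. *)

Definition dot (u v : pt) : R := px u * px v + py u * py v + pz u * pz v.

Definition cross (u v : pt) : pt :=
  mkpt (py u * pz v - pz u * py v) (pz u * px v - px u * pz v) (px u * py v - py u * px v).

Definition det_top (u v : pt) : R := px u * py v - py u * px v.

Definition graph_pt (c1 c2 b3 : R) (A : pt) : pt :=
  mkpt (px A) (py A) (c1 * px A + c2 * py A + b3).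

Lemma graph_pt_fixed c1 c2 b3 A :
  pz A = c1 * px A + c2 * py A + b3 -> A = graph_pt c1 c2 b3 A.
Proof. destruct A; cbn; intros ->; reflexivity. Qed.

Lemma det3_triple_mid u v w : det3 u v w = dot v (cross w u).
Proof. unfold det3, dot, cross; cbn; ring. Qed.

Lemma det3_triple u v w : det3 u v w = dot w (cross u v).
Proof. unfold det3, dot, cross; cbn; ring. Qed.

Lemma dot_cross_self u w : dot u (cross w u) = 0.
Proof. unfold dot, cross; cbn; ring. Qed.

Lemma linear_form_eq0 (a b : R) (u v : pt) :
  det_top u v <> 0 -> a * px u + b * py u = 0 -> a * px v + b * py v = 0 -> a = 0 /\ b = 0.
Proof.
  unfold det_top; intros Huv Hu Hv.
  assert (Ea : a * (px u * py v - py u * px v)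
               = py v * (a * px u + b * py u) - py u * (a * px v + b * py v)) by ring.
  assert (Eb : b * (px u * py v - py u * px v)
               = px u * (a * px v + b * py v) - px v * (a * px u + b * py u)) by ring.
  rewrite Hu, Hv, !Rmult_0_r, Rminus_0_r in Ea, Eb.
  split; [destruct (Rmult_integral _ _ Ea) | destruct (Rmult_integral _ _ Eb)]; tauto.
Qed.

Lemma convex_quad_diagonals A B C D : convex_quad A B C D ->
  exists s t : R, 0 < s < 1 /\ 0 < t < 1 /\
    forall w : pt, s * dot (psub C A) w = (1 - t) * dot (psub B A) w + t * dot (psub D A) w.
Proof.
  intros [_ (s & t & Hs & Ht & Heq)]; exists s, t; split; [exact Hs|split; [exact Ht|]].
  intros w; injection Heq; intros Ez Ey Ex.
  unfold dot, psub; cbn [px py pz].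
  replace (s * ((px C - px A) * px w + (py C - py A) * py w + (pz C - pz A) * pz w))
    with (s * (px C - px A) * px w + s * (py C - py A) * py w + s * (pz C - pz A) * pz w) by ring.
  replace (s * (px C - px A)) with ((1 - t) * (px B - px A) + t * (px D - px A)) by lra.
  replace (s * (py C - py A)) with ((1 - t) * (py B - py A) + t * (py D - py A)) by lra.
  replace (s * (pz C - pz A)) with ((1 - t) * (pz B - pz A) + t * (pz D - pz A)) by lra.
  ring.
Qed.

Lemma convex_quad_spans A B C D : convex_quad A B C D ->
  exists w : pt, det3 (psub B A) (psub D A) w <> 0.
Proof.
  intros Hq; destruct (convex_quad_diagonals _ _ _ _ Hq) as (s & t & Hs & Ht & Hdiag).
  destruct Hq as [[w Hw] _]; exists w; intros H0; apply Hw.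
  rewrite det3_triple_mid in *.
  specialize (Hdiag (cross w (psub B A))); rewrite dot_cross_self, H0 in Hdiag.
  nra.
Qed.

Lemma convex_quad_graph A B C D c1 c2 b3 :
  convex_quad A B C D -> det_top (psub B A) (psub D A) <> 0 ->
  convex_quad (graph_pt c1 c2 b3 A) (graph_pt c1 c2 b3 B)
              (graph_pt c1 c2 b3 C) (graph_pt c1 c2 b3 D).
Proof.
  intros Hq Htop; pose proof (convex_quad_diagonals _ _ _ _ Hq) as (s & t & Hs & Ht & Hdiag).
  destruct Hq as [_ (s' & t' & Hs' & Ht' & Heq)].
  split.
  - assert (Hside : s * det_top (psub B A) (psub C A) = t * det_top (psub B A) (psub D A)).
    { specialize (Hdiag (mkpt (- py (psub B A)) (px (psub B A)) 0)).
      unfold dot, det_top in *; cbn [px py pz] in *; lra. }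
    exists (mkpt 0 0 1); intros H0; apply Htop.
    unfold det3, det_top, graph_pt, psub in *; cbn [px py pz] in *. nra.
  - exists s', t'; repeat split; try lra.
    injection Heq; intros _ Ey Ex.
    unfold graph_pt, padd, pscal, psub; cbn [px py pz]. f_equal; [lra | lra |].
    transitivity (c1 * (px A + s' * (px C - px A)) + c2 * (py A + s' * (py C - py A)) + b3);
      [ring | rewrite Ex, Ey; ring].
Qed.

Lemma convex_quad_on_graph A B C D :
  convex_quad A B C D -> det_top (psub B A) (psub D A) <> 0 ->
  exists c1 c2 b3 : R, A = graph_pt c1 c2 b3 A /\ B = graph_pt c1 c2 b3 B /\
                       C = graph_pt c1 c2 b3 C /\ D = graph_pt c1 c2 b3 D.
Proof.
  intros Hq Htop; destruct (convex_quad_diagonals _ _ _ _ Hq) as (s & t & Hs & Ht & Hdiag).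
  set (den := det_top (psub B A) (psub D A)) in *.
  set (c1 := (pz (psub B A) * py (psub D A) - pz (psub D A) * py (psub B A)) / den).
  set (c2 := (px (psub B A) * pz (psub D A) - px (psub D A) * pz (psub B A)) / den).
  set (w := mkpt (- c1) (- c2) 1).
  assert (HB : dot (psub B A) w = 0)
    by (unfold dot, w, c1, c2, den, det_top; cbn; field; exact Htop).
  assert (HD : dot (psub D A) w = 0)
    by (unfold dot, w, c1, c2, den, det_top; cbn; field; exact Htop).
  assert (HC : dot (psub C A) w = 0).
  { specialize (Hdiag w); rewrite HB, HD in Hdiag. nra. }
  exists c1, c2, (pz A - c1 * px A - c2 * py A).
  unfold dot, w, psub in *; cbn [px py pz] in *.
  repeat split; apply graph_pt_fixed; lra.
Qed.

Lemma convex4_rot r1 r2 r3 r4 : convex4 r1 r2 r3 r4 -> convex4 r2 r3 r4 r1.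
Proof. unfold convex4; tauto. Qed.

Lemma admissible4_rot r1 r2 r3 r4 : admissible4 r1 r2 r3 r4 -> admissible4 r2 r3 r4 r1.
Proof.
  intros (l1 & l2 & l3 & l4 & H1 & H2 & H3 & H4 & Hx & Hy).
  exists l2, l3, l4, l1; repeat split; auto; lra.
Qed.

Lemma admissible4_top_independent r1 r2 r3 r4 :
  convex4 r1 r2 r3 r4 -> admissible4 r1 r2 r3 r4 -> det_top r1 r2 <> 0.
Proof.
  intros Hc (l1 & l2 & l3 & l4 & _ & _ & H3 & H4 & Hx & Hy) Htop.
  (* [sum l_k r_k] is isotropic, so its volume with r1, r2 is a multiple of [det_top r1 r2]. *)
  assert (E : l3 * det3 r1 r2 r3 + l4 * det3 r1 r2 r4 =
      (l1 * px r1 + l2 * px r2 + l3 * px r3 + l4 * px r4) * (py r1 * pz r2 - pz r1 * py r2)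
    + (l1 * py r1 + l2 * py r2 + l3 * py r3 + l4 * py r4) * (pz r1 * px r2 - px r1 * pz r2)
    + (l1 * pz r1 + l2 * pz r2 + l3 * pz r3 + l4 * pz r4) * det_top r1 r2)
    by (unfold det3, det_top; ring).
  rewrite Hx, Hy, Htop in E.
  destruct Hc as [Hc | Hc]; nra.
Qed.

Lemma convex4_face_nonisotropic r1 r2 r3 r4 e1 e2 :
  convex4 r1 r2 r3 r4 -> admissible4 r1 r2 r3 r4 ->
  det3 e1 e2 r1 = 0 -> det3 e1 e2 r2 = 0 -> (exists w : pt, det3 e1 e2 w <> 0) ->
  det_top e1 e2 <> 0.
Proof.
  (* An isotropic plane has a horizontal normal; being orthogonal to r1 and r2, whose
     top views are independent, that normal vanishes. *)
  intros Hc Ha H1 H2 [w Hw] Htop; apply Hw.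
  pose proof (admissible4_top_independent _ _ _ _ Hc Ha) as Hr.
  rewrite det3_triple in *.
  assert (HN : pz (cross e1 e2) = 0) by exact Htop.
  unfold dot in *; rewrite HN in *.
  destruct (linear_form_eq0 (px (cross e1 e2)) (py (cross e1 e2)) r1 r2 Hr) as [N1 N2]; try lra.
  rewrite N1, N2; ring.
Qed.

Definition nonisotropic_face (P : nat -> nat -> pt) (i j : nat) : Prop :=
  det_top (psub (P (S i) j) (P i j)) (psub (P i (S j)) (P i j)) <> 0.

Lemma interior_index_near (m a : nat) : (2 <= m)%nat -> (a < m)%nat ->
  exists i : nat, (0 < i < m)%nat /\ (a = pred i \/ a = i).
Proof.
  intros Hm Ha; destruct (Nat.lt_ge_cases (S a) m).
  - exists (S a); split; [lia | left; reflexivity].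
  - exists a; split; [lia | right; reflexivity].
Qed.

Lemma dual_convex_nonisotropic m n F a b :
  dual_convex m n F -> (a < m)%nat -> (b < n)%nat -> nonisotropic_face F a b.
Proof.
  intros (Hm & Hn & Hnet & Hdc) Ha Hb.
  pose proof (convex_quad_spans _ _ _ _ (Hnet a b Ha Hb)) as Hspan.
  destruct (interior_index_near m a Hm Ha) as (i & Hi & Ea).
  destruct (interior_index_near n b Hn Hb) as (j & Hj & Eb).
  destruct (Hdc i j Hi Hj)
    as (r1 & r2 & r3 & r4 & Hc & Had & p1 & p2 & p3 & p4 & p5 & p6 & p7 & p8).
  unfold nonisotropic_face; unfold parallel_to_face in *.
  destruct Ea, Eb; subst a b.
  - exact (convex4_face_nonisotropic r1 r2 r3 r4 _ _ Hc Had p1 p2 Hspan).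
  - apply (convex4_face_nonisotropic r4 r1 r2 r3); auto using convex4_rot, admissible4_rot.
  - apply (convex4_face_nonisotropic r2 r3 r4 r1); auto using convex4_rot, admissible4_rot.
  - apply (convex4_face_nonisotropic r3 r4 r1 r2); auto using convex4_rot, admissible4_rot.
Qed.

Definition with_heights (P : nat -> nat -> pt) (h : nat -> nat -> R) (k l : nat) : pt :=
  mkpt (px (P k l)) (py (P k l)) (h k l).

Lemma face_dual_top_ext (P Q : nat -> nat -> pt) (i j : nat) :
  (forall k l : nat, (k <= S i)%nat -> (l <= S j)%nat -> P k l = Q k l) ->
  face_dual_top P i j = face_dual_top Q i j.
Proof.
  intros HPQ; unfold face_dual_top.
  rewrite (HPQ i j), (HPQ (S i) j), (HPQ i (S j)) by lia; reflexivity.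
Qed.

Lemma face_dual_top_heights_linear P h1 h2 t i j : nonisotropic_face P i j ->
  face_dual_top (with_heights P (fun k l => h1 k l + t * h2 k l)) i j =
  padd2 (face_dual_top (with_heights P h1) i j) (pscal2 t (face_dual_top (with_heights P h2) i j)).
Proof.
  unfold nonisotropic_face, det_top, face_dual_top, with_heights, padd2, pscal2, psub.
  cbn [px py pz fst snd]; intros Htop.
  f_equal; field; contradict Htop; lra.
Qed.

Lemma noncollinear_affine_eq0 (A B D : pt) (a b d : R) :
  det_top (psub B A) (psub D A) <> 0 ->
  a * px A + b * py A = d -> a * px B + b * py B = d -> a * px D + b * py D = d ->
  a = 0 /\ b = 0.
Proof.
  intros Htop HA HB HD; apply (linear_form_eq0 a b _ _ Htop); unfold psub; cbn; lra.
Qed.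

Lemma iso_cong_vertical c1 c2 b3 x :
  iso_cong 0 c1 c2 0 0 b3 x = mkpt 0 0 (c1 * px x + c2 * py x + b3).
Proof. unfold iso_cong; f_equal; ring. Qed.

Lemma vertical_decomposition (A B V : pt) :
  (px V = 0 /\ py V = 0 /\ B = padd (mkpt (px A) (py A) 0) V) <->
  (px B = px A /\ py B = py A /\ V = mkpt 0 0 (pz B)).
Proof.
  destruct A as [ax ay az], B as [bx by' bz], V as [vx vy vz]; unfold padd; cbn.
  split.
  - intros (-> & -> & E); injection E as -> -> ->; repeat split; f_equal; ring.
  - intros (-> & -> & E); injection E as -> -> ->; repeat split; f_equal; ring.
Qed.

Section VerticalVelocities.

Variables (m n : nat) (F G V : nat -> nat -> pt).
Hypothesis HF : dual_convex m n F.
Hypothesis HFG : v_parallel m n F G.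
Hypothesis HV : forall k l : nat, (k <= m)%nat -> (l <= n)%nat -> V k l = mkpt 0 0 (pz (G k l)).

Lemma graph_of_congruence phi c1 c2 b1 b2 b3 k l : (k <= m)%nat -> (l <= n)%nat ->
  V k l = iso_cong phi c1 c2 b1 b2 b3 (F k l) -> G k l = graph_pt c1 c2 b3 (F k l).
Proof.
  intros Hk Hl E; rewrite HV in E by assumption.
  destruct (HFG k l Hk Hl) as [Ex Ey].
  apply (f_equal pz) in E; cbn in E.
  destruct (G k l); cbn in *; unfold graph_pt; f_equal; assumption.
Qed.

Lemma congruence_of_graph c1 c2 b3 k l : (k <= m)%nat -> (l <= n)%nat ->
  G k l = graph_pt c1 c2 b3 (G k l) -> V k l = iso_cong 0 c1 c2 0 0 b3 (F k l).
Proof.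
  intros Hk Hl E; rewrite HV, iso_cong_vertical, E by assumption; cbn.
  destruct (HFG k l Hk Hl) as [-> ->]; reflexivity.
Qed.

Lemma G_nonisotropic i j : (i < m)%nat -> (j < n)%nat -> nonisotropic_face G i j.
Proof.
  intros Hi Hj; pose proof (dual_convex_nonisotropic m n F i j HF Hi Hj) as Htop.
  destruct (HFG i j) as [E1 E2]; [lia | lia |].
  destruct (HFG (S i) j) as [E3 E4]; [lia | lia |].
  destruct (HFG i (S j)) as [E5 E6]; [lia | lia |].
  unfold nonisotropic_face, det_top, psub in *; cbn in *.
  rewrite E1, E2, E3, E4, E5, E6; exact Htop.
Qed.

Lemma face_congruence_iff_convex i j : (i < m)%nat -> (j < n)%nat ->
  (exists phi c1 c2 b1 b2 b3 : R,
     V i j = iso_cong phi c1 c2 b1 b2 b3 (F i j) /\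
     V (S i) j = iso_cong phi c1 c2 b1 b2 b3 (F (S i) j) /\
     V (S i) (S j) = iso_cong phi c1 c2 b1 b2 b3 (F (S i) (S j)) /\
     V i (S j) = iso_cong phi c1 c2 b1 b2 b3 (F i (S j))) <->
  convex_quad (G i j) (G (S i) j) (G (S i) (S j)) (G i (S j)).
Proof.
  intros Hi Hj; pose proof (dual_convex_nonisotropic m n F i j HF Hi Hj) as Htop.
  destruct HF as (_ & _ & Hnet & _).
  split.
  - intros (phi & c1 & c2 & b1 & b2 & b3 & E1 & E2 & E3 & E4).
    rewrite (graph_of_congruence phi c1 c2 b1 b2 b3 i j),
      (graph_of_congruence phi c1 c2 b1 b2 b3 (S i) j),
      (graph_of_congruence phi c1 c2 b1 b2 b3 (S i) (S j)),
      (graph_of_congruence phi c1 c2 b1 b2 b3 i (S j)) by (assumption || lia).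
    exact (convex_quad_graph _ _ _ _ _ _ _ (Hnet i j Hi Hj) Htop).
  - intros Hq.
    destruct (convex_quad_on_graph _ _ _ _ Hq (G_nonisotropic i j Hi Hj))
      as (c1 & c2 & b3 & E1 & E2 & E3 & E4).
    exists 0, c1, c2, 0, 0, b3.
    repeat split; apply congruence_of_graph; auto; lia.
Qed.

Lemma lift_with_heights t k l : (k <= m)%nat -> (l <= n)%nat ->
  padd (F k l) (pscal t (V k l)) =
  with_heights F (fun k l => pz (F k l) + t * pz (G k l)) k l.
Proof.
  intros Hk Hl; rewrite HV by assumption.
  unfold padd, pscal, with_heights; cbn; f_equal; ring.
Qed.

Lemma G_with_heights k l : (k <= m)%nat -> (l <= n)%nat ->
  G k l = with_heights F (fun k l => pz (G k l)) k l.
Proof.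
  intros Hk Hl; unfold with_heights.
  destruct (HFG k l Hk Hl) as [Ex Ey]; rewrite <- Ex, <- Ey.
  destruct (G k l); reflexivity.
Qed.

Lemma face_dual_top_lift t i j : (i < m)%nat -> (j < n)%nat ->
  face_dual_top (fun k l => padd (F k l) (pscal t (V k l))) i j =
  padd2 (face_dual_top F i j) (pscal2 t (face_dual_top G i j)).
Proof.
  intros Hi Hj.
  rewrite (face_dual_top_ext _ (with_heights F (fun k l => pz (F k l) + t * pz (G k l))))
    by (intros; apply lift_with_heights; lia).
  rewrite face_dual_top_heights_linear by exact (dual_convex_nonisotropic m n F i j HF Hi Hj).
  assert (HFh : face_dual_top (with_heights F (fun k l => pz (F k l))) i j = face_dual_top F i j).
  { apply face_dual_top_ext; intros k l _ _; unfold with_heights; destruct (F k l); reflexivity. }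
  assert (HGh : face_dual_top (with_heights F (fun k l => pz (G k l))) i j = face_dual_top G i j).
  { apply face_dual_top_ext; intros k l Hk Hl; symmetry; apply G_with_heights; lia. }
  rewrite HFh, HGh; reflexivity.
Qed.

Lemma curvature_lift t i j : (0 < i < m)%nat -> (0 < j < n)%nat ->
  curvature (fun k l => padd (F k l) (pscal t (V k l))) i j =
  area4 (padd2 (face_dual_top F (pred i) (pred j)) (pscal2 t (face_dual_top G (pred i) (pred j))))
        (padd2 (face_dual_top F i (pred j)) (pscal2 t (face_dual_top G i (pred j))))
        (padd2 (face_dual_top F i j) (pscal2 t (face_dual_top G i j)))
        (padd2 (face_dual_top F (pred i) j) (pscal2 t (face_dual_top G (pred i) j))).
Proof.
  intros Hi Hj; unfold curvature.
  rewrite !face_dual_top_lift by lia; reflexivity.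
Qed.

Lemma isometric_deformation_iff :
  iso_isometric_deformation m n F V <->
  is_net m n G /\
  forall i j : nat, (i <= m)%nat -> (j <= n)%nat -> mixed_curvature_zero m n F G i j.
Proof.
  split; intros [Hfaces Hverts]; split.
  - intros i j Hi Hj; apply face_congruence_iff_convex; auto.
  - intros i j _ _ Hi Hj; unfold mixed_area_zero.
    eapply is_derive_ext; [intro t; apply curvature_lift; auto | exact (Hverts i j Hi Hj)].
  - intros i j Hi Hj; apply face_congruence_iff_convex; auto.
  - intros i j Hi Hj.
    eapply is_derive_ext; [intro t; symmetry; apply curvature_lift; auto |].
    exact (Hverts i j ltac:(lia) ltac:(lia) Hi Hj).
Qed.

Lemma trivial_deformation_iff : trivial_deformation m n F V <-> in_one_plane m n G.
Proof.
  split.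
  - intros (phi & c1 & c2 & b1 & b2 & b3 & Htriv).
    exists c1, c2, (-1), (- b3); split; [lra|].
    intros k l Hk Hl.
    rewrite (graph_of_congruence phi c1 c2 b1 b2 b3 k l Hk Hl (Htriv k l Hk Hl)).
    unfold graph_pt; cbn; ring.
  - intros (a & b & c & d & Hne & Hplane).
    destruct (Req_dec c 0) as [Hc | Hc].
    + exfalso.
      destruct HF as (Hm & Hn & _).
      assert (Htop := dual_convex_nonisotropic m n F 0 0 HF ltac:(lia) ltac:(lia)).
      assert (HFline : forall k l, (k <= m)%nat -> (l <= n)%nat ->
                a * px (F k l) + b * py (F k l) = d).
      { intros k l Hk Hl; specialize (Hplane k l Hk Hl).
        destruct (HFG k l Hk Hl) as [Ex Ey]; rewrite Ex, Ey, Hc in Hplane; lra. }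
      destruct (noncollinear_affine_eq0 _ _ _ a b d Htop); try apply HFline; lia || lra.
    + exists 0, (- a / c), (- b / c), 0, 0, (d / c).
      intros k l Hk Hl; apply congruence_of_graph; auto.
      specialize (Hplane k l Hk Hl); apply graph_pt_fixed.
      apply (Rmult_eq_reg_l c); [field_simplify; lra | exact Hc].
Qed.

End VerticalVelocities.

Theorem lemma4 (m n : nat) (F : nat -> nat -> pt) (HF : dual_convex m n F)
  (G : nat -> nat -> pt) :
  velocity_diagram m n F G <->
  (is_net m n G /\ v_parallel m n F G /\ ~ in_one_plane m n G /\
   forall i j : nat, (i <= m)%nat -> (j <= n)%nat -> mixed_curvature_zero m n F G i j).
Proof.
  split.
  - intros (V & Hdef & Hnontriv & Hvert & HG).
    assert (Hdec : forall k l, (k <= m)%nat -> (l <= n)%nat ->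
              px (G k l) = px (F k l) /\ py (G k l) = py (F k l) /\ V k l = mkpt 0 0 (pz (G k l)))
      by (intros k l Hk Hl; apply vertical_decomposition;
          destruct (Hvert k l Hk Hl); auto).
    assert (HFG : v_parallel m n F G) by (intros k l Hk Hl; split; apply Hdec; auto).
    assert (HV : forall k l, (k <= m)%nat -> (l <= n)%nat -> V k l = mkpt 0 0 (pz (G k l)))
      by (intros k l Hk Hl; apply Hdec; auto).
    rewrite (isometric_deformation_iff m n F G V HF HFG HV) in Hdef.
    rewrite (trivial_deformation_iff m n F G V HF HFG HV) in Hnontriv.
    tauto.
  - intros (Hnet & HFG & Hnp & Hmc).
    set (V := fun k l => mkpt 0 0 (pz (G k l))).
    assert (HV : forall k l, (k <= m)%nat -> (l <= n)%nat -> V k l = mkpt 0 0 (pz (G k l)))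
      by reflexivity.
    exists V.
    rewrite (isometric_deformation_iff m n F G V HF HFG HV),
      (trivial_deformation_iff m n F G V HF HFG HV).
    assert (Hdec : forall k l, (k <= m)%nat -> (l <= n)%nat ->
              px (V k l) = 0 /\ py (V k l) = 0 /\
              G k l = padd (mkpt (px (F k l)) (py (F k l)) 0) (V k l))
      by (intros k l Hk Hl; apply vertical_decomposition; destruct (HFG k l Hk Hl); auto).
    split; [tauto | split; [tauto | split]].
    + intros k l Hk Hl; split; apply Hdec; auto.
    + intros k l Hk Hl; apply Hdec; auto.
Qed.
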